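(* Let $\mathcal F$ be a proper filter on $\omega$ and consider the game $\mathfrak G(\mathcal F,\omega,\mathcal F^* )$. Then (1) player I has a winning strategy if and only if $\mathcal F$ is countably generated; (2) player II has a winning strategy if and only if $\mathcal F$ is not $+$-Ramsey.
   Context: A filter on $\omega$ is a family $\mathcal F\subseteq\mathcal P(\omega)$ closed under finite intersections and supersets and containing all cofinite sets; it is proper if all its members are infinite. $\mathcal F^+=\{X\subseteq\omega:\omega\setminus X\notin\mathcal F\}$ and $\mathcal F^*=\mathcal P(\omega)\setminus\mathcal F^+$. $\mathcal F$ is countably generated if there is a countable $\mathcal B\subseteq\mathcal F$ such that every member of $\mathcal F$ contains a member of $\mathcal B$. Game $\mathfrak G(\mathcal X,\omega,\mathcal Z)$: at each stage $k\in\omega$, player I chooses $X_k\in\mathcal X$ and player II responds with $n_k\in X_k$; II wins if $\{n_k:k\in\omega\}\in\mathcal Z$, otherwise I wins. A tree is a set $T$ of finite sequences of natural numbers containing the empty sequence and closed under initial segments; it is an $\mathcal F^+$-tree if for each $\bar s\in T$ there is $X_{\bar s}\in\mathcal F^+$ with $\bar s^\frown n\in T$ for all $n\in X_{\bar s}$; a branch (infinite sequence all of whose initial segments lie in $T$) is in $\mathcal F^+$ if its set of values is in $\mathcal F^+$. $\mathcal F$ is $+$-Ramsey if every $\mathcal F^+$-tree has a branch in $\mathcal F^+$. *)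

From Stdlib Require Import List Arith.
Import ListNotations.

Definition natset := nat -> Prop.
Definition family := natset -> Prop.

Definition subset (X Y : natset) : Prop := forall n, X n -> Y n.
Definition setI (X Y : natset) : natset := fun n => X n /\ Y n.
Definition setC (X : natset) : natset := fun n => ~ X n.
Definition cofinite (X : natset) : Prop := exists N, forall n, N <= n -> X n.
Definition infinite (X : natset) : Prop := forall N, exists n, N <= n /\ X n.

Definition is_filter (F : family) : Prop :=
  (forall X Y, F X -> F Y -> F (setI X Y)) /\
  (forall X Y, F X -> subset X Y -> F Y) /\
  (forall X, cofinite X -> F X).

Definition proper_filter (F : family) : Prop :=
  is_filter F /\ (forall X, F X -> infinite X).

Definition Fplus (F : family) : family := fun X => ~ F (setC X).
Definition Fstar (F : family) : family := fun X => ~ Fplus F X.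

Definition countably_generated (F : family) : Prop :=
  exists B : nat -> natset,
    (forall k, F (B k)) /\ (forall X, F X -> exists k, subset (B k) X).

Definition range (f : nat -> nat) : natset := fun m => exists k, f k = m.

Definition prefix {A : Type} (f : nat -> A) (k : nat) : list A :=
  map f (seq 0 k).

(* Game G(X, omega, Z): at stage k, I plays X_k in X, II answers n_k in X_k;
   II wins iff {n_k : k} in Z. *)

(* A strategy for I maps the finite sequence of II's previous moves to a move
   of I (I's own earlier moves are determined by the strategy). *)

Definition compatI (sigma : list nat -> natset) (n : nat -> nat) : Prop :=
  forall k, sigma (prefix n k) (n k).

Definition I_has_winning_strategy (Xfam Z : family) : Prop :=
  exists sigma : list nat -> natset,
    (forall s, Xfam (sigma s)) /\
    (forall n : nat -> nat, compatI sigma n -> ~ Z (range n)).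

(* A strategy for II maps the (nonempty) sequence of I's moves so far
   to a legal answer in I's last move. *)
Definition legal_II (Xfam : family) (tau : list natset -> nat) : Prop :=
  forall (l : list natset) (X : natset),
    (forall Y, In Y l -> Xfam Y) -> Xfam X -> X (tau (l ++ [X])).

Definition II_has_winning_strategy (Xfam Z : family) : Prop :=
  exists tau : list natset -> nat,
    legal_II Xfam tau /\
    (forall Xs : nat -> natset, (forall k, Xfam (Xs k)) ->
       Z (range (fun k => tau (prefix Xs (S k))))).

Definition is_tree (T : list nat -> Prop) : Prop :=
  T [] /\ (forall s t, T (s ++ t) -> T s).

Definition Fplus_tree (F : family) (T : list nat -> Prop) : Prop :=
  is_tree T /\
  (forall s, T s -> exists X, Fplus F X /\ (forall n, X n -> T (s ++ [n]))).

Definition branch (T : list nat -> Prop) (b : nat -> nat) : Prop :=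
  forall k, T (prefix b k).

Definition plus_Ramsey (F : family) : Prop :=
  forall T, Fplus_tree F T -> exists b, branch T b /\ Fplus F (range b).

(* Part (1): if B_0, B_1, ... generates F, player I wins by playing B_k at stage k, since the answers
   then meet every B_k and so their complement is not in F.  Conversely, if I has a winning strategy,
   its countably many possible moves generate F: otherwise some Y in F contains none of them, and II,
   always answering outside Y, ends with a set whose complement contains Y.

   Part (2): a winning strategy of II and an F^+-tree without F^+-branch are two descriptions of the
   same object.  Given such a tree, II follows it, answering inside the current node's F^+-set and
   I's F-set, which meet.  Given a strategy of II, the sequences of answers it can produce form an
   F^+-tree (the possible answers at a position form an F^+-set, as the strategy answers inside any
   set of F), and along any branch II's answers come from a single play of I, so they lie in F^*. *)

From mathcomp Require Import choice.
From Stdlib Require Import List Classical ClassicalEpsilon FunctionalExtensionality.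
Import ListNotations.

Lemma list_nat_enumerable : exists e : nat -> list nat, forall s, exists k, e k = s.
Proof.
  exists (fun k => match unpickle k with Some s => s | None => [] end).
  intros s. exists (pickle s). rewrite pickleK. reflexivity.
Qed.

Section Prefix.

Context {A : Type}.

Lemma prefix_S (a : nat -> A) k : prefix a (S k) = prefix a k ++ [a k].
Proof. unfold prefix. rewrite seq_S, map_app. reflexivity. Qed.

Lemma length_prefix (a : nat -> A) k : length (prefix a k) = k.
Proof. unfold prefix. rewrite length_map, length_seq. reflexivity. Qed.

Lemma In_prefix (a : nat -> A) k x : In x (prefix a k) -> exists i, x = a i.
Proof. unfold prefix. intros [i [<- _]]%in_map_iff. eauto. Qed.

End Prefix.

(* [trace step l] replays a strategy [step] against the moves [l] and records its answers. *)
Section Trace.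

Context {A B : Type} (step : list B -> A -> B).

Definition trace (l : list A) : list B := fold_left (fun h x => h ++ [step h x]) l [].

Lemma trace_snoc l x : trace (l ++ [x]) = trace l ++ [step (trace l) x].
Proof. unfold trace. rewrite fold_left_app. reflexivity. Qed.

Lemma trace_prefix (a : nat -> A) k :
  trace (prefix a k) = prefix (fun i => step (trace (prefix a i)) (a i)) k.
Proof.
  induction k as [|k IHk]; [reflexivity|].
  rewrite !prefix_S, trace_snoc, IHk. reflexivity.
Qed.

Lemma In_trace (P : B -> Prop) : (forall h x, P (step h x)) ->
  forall l y, In y (trace l) -> P y.
Proof.
  intros Hstep l. induction l as [|x l IHl] using rev_ind; [contradiction|].
  rewrite trace_snoc. intros y [Hy | [<- | []]]%in_app_or; auto.
Qed.

End Trace.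

Lemma sequence_of_history {A : Type} (c : list A -> A) :
  exists a : nat -> A, forall k, a k = c (prefix a k).
Proof.
  set (step := fun (h : list A) (_ : unit) => c h).
  exists (fun i => step (trace step (prefix (fun _ => tt) i)) tt).
  intros k. rewrite <- (trace_prefix step (fun _ => tt)). reflexivity.
Qed.

Section Filter.

Variable F : family.
Hypothesis HF : is_filter F.

Lemma filter_full : F (fun _ => True).
Proof. apply HF. exists 0. auto. Qed.

Lemma filter_superset X Y : F X -> subset X Y -> F Y.
Proof. apply HF. Qed.

Lemma Fstar_compl X : F (setC X) -> Fstar F X.
Proof. intros HX HXp. exact (HXp HX). Qed.

Lemma Fplus_meet X Y : Fplus F X -> F Y -> exists n, X n /\ Y n.
Proof.
  intros HX HY. apply NNPP. intros Hno. apply HX.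
  apply (filter_superset Y); [exact HY|]. intros n Hn HXn. apply Hno. eauto.
Qed.

Lemma not_countably_generated_escape (D : list nat -> natset) :
  ~ countably_generated F -> (forall s, F (D s)) ->
  exists Y, F Y /\ forall s, exists n, D s n /\ ~ Y n.
Proof.
  intros Hncg HD. destruct list_nat_enumerable as [e He].
  apply NNPP. intros Hno. apply Hncg.
  exists (fun k => D (e k)). split; [intros k; apply HD|].
  intros X HX. apply NNPP. intros HXno. apply Hno. exists X. split; [exact HX|].
  intros s. destruct (He s) as [k <-]. apply NNPP. intros Hs. apply HXno.
  exists k. intros n Hn. apply NNPP. intros HXn. apply Hs. eauto.
Qed.

Lemma countably_generated_I_wins :
  countably_generated F -> I_has_winning_strategy F (Fstar F).
Proof.
  intros [B [HB HBgen]]. exists (fun s => B (length s)). split; [intros s; apply HB|].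
  intros n Hn Hstar. apply Hstar. intros Hcompl.
  destruct (HBgen _ Hcompl) as [k Hk].
  specialize (Hn k). cbv beta in Hn. rewrite length_prefix in Hn.
  apply (Hk _ Hn). exists k. reflexivity.
Qed.

Lemma I_wins_countably_generated :
  I_has_winning_strategy F (Fstar F) -> countably_generated F.
Proof.
  intros [sigma [Hsigma Hwin]]. apply NNPP. intros Hncg.
  destruct (not_countably_generated_escape sigma Hncg Hsigma) as [Y [HY Hesc]].
  destruct (choice _ Hesc) as [answer Hanswer].
  destruct (sequence_of_history answer) as [n Hn].
  apply (Hwin n).
  - intros k. rewrite Hn. apply Hanswer.
  - apply Fstar_compl, (filter_superset Y); [exact HY|].
    intros m HYm [k <-]. rewrite Hn in HYm. exact (proj2 (Hanswer _) HYm).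
Qed.

Section TreeStrategy.

Variable T : list nat -> Prop.
Hypothesis HT : Fplus_tree F T.

Let answer (s : list nat) (X : natset) : nat :=
  epsilon (inhabits 0) (fun n => X n /\ T (s ++ [n])).

Lemma answer_spec s X : T s -> F X -> X (answer s X) /\ T (s ++ [answer s X]).
Proof.
  intros Hs HX. apply epsilon_spec. destruct HT as [_ Hsucc].
  destruct (Hsucc s Hs) as [Xs [HXs Hext]].
  destruct (Fplus_meet _ _ HXs HX) as [n [HXsn HXn]]. eauto.
Qed.

Lemma trace_answer_in_tree l : (forall X, In X l -> F X) -> T (trace answer l).
Proof.
  induction l as [|X l IHl] using rev_ind; intros Hl.
  - apply HT.
  - rewrite trace_snoc. apply answer_spec; auto using in_or_app, in_eq.
Qed.

Lemma II_strategy_along_tree : exists tau : list natset -> nat, legal_II F tau /\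
  forall Xs : nat -> natset, (forall k, F (Xs k)) ->
    branch T (fun k => tau (prefix Xs (S k))).
Proof.
  set (tau := fun l => last (trace answer l) 0).
  assert (Htau : forall l X, tau (l ++ [X]) = answer (trace answer l) X).
  { intros l X. unfold tau. rewrite trace_snoc, last_last. reflexivity. }
  exists tau. split.
  - intros l X Hl HX. rewrite Htau. apply answer_spec; auto using trace_answer_in_tree.
  - intros Xs HXs k.
    replace (fun k => tau (prefix Xs (S k)))
      with (fun k => answer (trace answer (prefix Xs k)) (Xs k))
      by (apply functional_extensionality; intros i; rewrite prefix_S, Htau; reflexivity).
    rewrite <- trace_prefix. apply trace_answer_in_tree.
    intros Y HY. destruct (In_prefix _ _ _ HY) as [i ->]. apply HXs.
Qed.

End TreeStrategy.

Lemma not_plus_Ramsey_II_wins :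
  ~ plus_Ramsey F -> II_has_winning_strategy F (Fstar F).
Proof.
  intros HnR. apply not_all_ex_not in HnR. destruct HnR as [T HnR].
  apply imply_to_and in HnR. destruct HnR as [HT Hnobranch].
  destruct (II_strategy_along_tree _ HT) as [tau [Hlegal Hbranch]].
  exists tau. split; [exact Hlegal|].
  intros Xs HXs Hplus. apply Hnobranch. exists (fun k => tau (prefix Xs (S k))). auto.
Qed.

Section StrategyTree.

Variable tau : list natset -> nat.
Hypothesis Hlegal : legal_II F tau.

Definition replies (l : list natset) : natset := fun n => exists X, F X /\ tau (l ++ [X]) = n.

(* A canonical move of I producing the reply [n], so that branches determine plays of I. *)
Let move (l : list natset) (n : nat) : natset :=
  epsilon (inhabits (fun _ => True)) (fun X => F X /\ (replies l n -> tau (l ++ [X]) = n)).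

Lemma move_spec l n : F (move l n) /\ (replies l n -> tau (l ++ [move l n]) = n).
Proof.
  apply epsilon_spec. destruct (classic (replies l n)) as [[X [HX HXn]] | Hno].
  - exists X. auto.
  - exists (fun _ => True). split; [exact filter_full | contradiction].
Qed.

Definition reply_tree (s : list nat) : Prop :=
  forall t n u, s = t ++ n :: u -> replies (trace move t) n.

Lemma reply_tree_snoc s n : reply_tree s -> replies (trace move s) n -> reply_tree (s ++ [n]).
Proof.
  intros Hs Hn t m u E. induction u as [|x u _] using rev_ind.
  - apply app_inj_tail in E. destruct E as [<- <-]. exact Hn.
  - rewrite app_comm_cons, app_assoc in E. apply app_inj_tail in E.
    destruct E as [E _]. exact (Hs _ _ _ E).
Qed.

Lemma replies_Fplus l : (forall X, In X l -> F X) -> Fplus F (replies l).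
Proof.
  intros Hl Hcompl. apply (Hlegal l _ Hl Hcompl). exists (setC (replies l)). auto.
Qed.

Lemma reply_tree_Fplus_tree : Fplus_tree F reply_tree.
Proof.
  split; [split|].
  - intros t n u E. destruct t; discriminate.
  - intros s t Hst u n v ->. apply (Hst u n (v ++ t)). rewrite <- app_assoc. reflexivity.
  - intros s Hs. exists (replies (trace move s)). split.
    + apply replies_Fplus. apply In_trace. intros l n. apply move_spec.
    + intros n. apply reply_tree_snoc, Hs.
Qed.

Lemma reply_tree_branch_play (b : nat -> nat) : branch reply_tree b ->
  exists Xs : nat -> natset, (forall k, F (Xs k)) /\ (fun k => tau (prefix Xs (S k))) = b.
Proof.
  intros Hb. set (Xs := fun k => move (trace move (prefix b k)) (b k)).
  assert (Hhistory : forall k, prefix Xs k = trace move (prefix b k)).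
  { intros k. symmetry. apply trace_prefix. }
  exists Xs. split; [intros k; apply move_spec|].
  apply functional_extensionality. intros k.
  rewrite prefix_S, Hhistory. apply move_spec.
  apply (Hb (S k) (prefix b k) (b k) []). apply prefix_S.
Qed.

End StrategyTree.

Lemma II_wins_not_plus_Ramsey :
  II_has_winning_strategy F (Fstar F) -> ~ plus_Ramsey F.
Proof.
  intros [tau [Hlegal Hwin]] HR.
  destruct (HR _ (reply_tree_Fplus_tree _ Hlegal)) as [b [Hb Hplus]].
  destruct (reply_tree_branch_play _ _ Hb) as [Xs [HXs <-]].
  exact (Hwin Xs HXs Hplus).
Qed.

End Filter.

Theorem theorem2p9 (F : family) :
  proper_filter F ->
  (I_has_winning_strategy F (Fstar F) <-> countably_generated F) /\
  (II_has_winning_strategy F (Fstar F) <-> ~ plus_Ramsey F).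
Proof.
  intros [HF _]. split; split.
  - now apply I_wins_countably_generated.
  - now apply countably_generated_I_wins.
  - now apply II_wins_not_plus_Ramsey.
  - now apply not_plus_Ramsey_II_wins.
Qed.
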